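(* Let $d\ge 1$, let $W\in\mathbb{R}^{d\times d}$ be a weight matrix, let $x\in\mathbb{R}^d$ be an input, and let $M\in\{0,1\}^{d\times d}$ be the (unknown) binary mask actually used, so that the observed intermediate output is $y=(W\odot M)x$. Suppose an attacker draws a guessed mask $\hat M\in\{0,1\}^{d\times d}$ from a probability distribution $P$ on $\{0,1\}^{d\times d}$ such that $W\odot \hat M$ is invertible for every $\hat M$ with $P(\hat M)>0$, and reconstructs the input as $\hat x=(W\odot\hat M)^{-1}y$. Then $$\mathbb{E}_{\hat M\sim P}\,\|x-\hat x\|\;\ge\;\sum_{\hat M}P(\hat M)\,\frac{\sigma_{\min}\bigl(W\odot(\hat M-M)\bigr)}{\sigma_{\max}\bigl(W\odot \hat M\bigr)}\,\|x\|,$$ where the sum ranges over the support of $P$.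
   Context: $\odot$ denotes the entrywise (Hadamard) product of matrices; $\|\cdot\|$ is the Euclidean norm on $\mathbb{R}^d$; $\sigma_{\min}(A)$ and $\sigma_{\max}(A)$ denote the smallest and largest singular values of a square matrix $A$. The setting models a client-side layer in split learning whose weights are masked by a randomly sampled binary mask; the attacker knows $W$ and $y$ but not $M$. *)

From mathcomp Require Import all_boot all_order all_algebra.
From mathcomp Require Import boolp classical_sets reals.
Set Implicit Arguments. Unset Strict Implicit. Unset Printing Implicit Defensive.
Import Order.TTheory GRing.Theory Num.Theory.
Local Open Scope ring_scope.
Local Open Scope classical_set_scope.

Definition hadamard_mask (R : realType) (d : nat) (W : 'M[R]_d) (M : 'M[bool]_d)
  : 'M[R]_d := \matrix_(i, j) (W i j * (M i j)%:R).

Definition hadamard_mask_diff (R : realType) (d : nat) (W : 'M[R]_d)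
  (Mh M : 'M[bool]_d) : 'M[R]_d :=
  \matrix_(i, j) (W i j * ((Mh i j)%:R - (M i j)%:R)).

Definition enorm (R : realType) (d : nat) (v : 'cV[R]_d) : R :=
  Num.sqrt (\sum_i (v i 0) ^+ 2).

Definition singular_values (R : realType) (d : nat) (A : 'M[R]_d) : set R :=
  [set s | 0 <= s /\ eigenvalue (A^T *m A) (s ^+ 2)].

Definition sigma_min (R : realType) (d : nat) (A : 'M[R]_d) : R :=
  inf (singular_values A).
Definition sigma_max (R : realType) (d : nat) (A : 'M[R]_d) : R :=
  sup (singular_values A).

From mathcomp Require Import all_boot all_order all_algebra.
From mathcomp Require Import boolp classical_sets reals.
From mathcomp Require Import ring lra.
Import Order.TTheory GRing.Theory Num.Theory.
Set Implicit Arguments. Unset Strict Implicit. Unset Printing Implicit Defensive.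
Local Open Scope ring_scope.
Local Open Scope classical_set_scope.

(* Writing D := W ⊙ (M̂ - M) = W ⊙ M̂ - W ⊙ M, the reconstruction error is
   x - x̂ = (W ⊙ M̂)^-1 D x, so σ_min(D) ‖x‖ <= ‖D x‖ <= σ_max(W ⊙ M̂) ‖x - x̂‖;
   averaging over the support of P gives the bound.  The two singular value
   estimates come from the extreme eigenvalues of the Gram matrices, which are
   obtained variationally: the infimum μ of the Rayleigh quotient of a symmetric
   S is an eigenvalue, because S - μ is positive semidefinite with Rayleigh
   quotients arbitrarily close to 0, which a Cauchy-Schwarz argument shows to be
   incompatible with invertibility. *)

Section QuadraticForms.
Variables (R : realFieldType) (n : nat).
Implicit Types (u v w x y z : 'cV[R]_n) (A B S T : 'M[R]_n).

Definition dotv u v : R := (u^T *m v) 0 0.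
Definition qform S x : R := dotv x (S *m x).
Definition mxnorm_l1 A : R := \sum_i \sum_j `|A i j|.

Lemma dotvE u v : dotv u v = \sum_i u i 0 * v i 0.
Proof. by rewrite /dotv mxE; apply: eq_bigr => i _; rewrite mxE. Qed.

Lemma dotvC u v : dotv u v = dotv v u.
Proof. by rewrite !dotvE; apply: eq_bigr => i _; rewrite mulrC. Qed.

Lemma dotvDr u v w : dotv u (v + w) = dotv u v + dotv u w.
Proof. by rewrite /dotv mulmxDr mxE. Qed.

Lemma dotvZr a u v : dotv u (a *: v) = a * dotv u v.
Proof. by rewrite /dotv -scalemxAr mxE. Qed.

Lemma dotvNr u v : dotv u (- v) = - dotv u v.
Proof. by rewrite /dotv mulmxN mxE. Qed.

Lemma dotvDl u v w : dotv (v + w) u = dotv v u + dotv w u.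
Proof. by rewrite dotvC dotvDr !(dotvC u). Qed.

Lemma dotvZl a u v : dotv (a *: v) u = a * dotv v u.
Proof. by rewrite dotvC dotvZr dotvC. Qed.

Lemma dotv_mulmx u A v : dotv u (A *m v) = dotv (A^T *m u) v.
Proof. by rewrite /dotv trmx_mul trmxK mulmxA. Qed.

Lemma dotv_ge0 u : 0 <= dotv u u.
Proof. by rewrite dotvE; apply: sumr_ge0 => i _; rewrite -expr2 sqr_ge0. Qed.

Lemma dotv_eq0 u : (dotv u u == 0) = (u == 0).
Proof.
apply/idP/eqP => [|->]; last by rewrite dotvE big1 // => i _; rewrite mxE mul0r.
rewrite dotvE psumr_eq0 => [/allP u0|i _]; last by rewrite -expr2 sqr_ge0.
apply/matrixP => i j; rewrite (ord1 j) mxE.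
by have := u0 i (mem_index_enum i); rewrite /= -expr2 sqrf_eq0 => /eqP.
Qed.

Lemma dotv_gt0 u : u != 0 -> 0 < dotv u u.
Proof. by move=> u0; rewrite lt_def dotv_eq0 u0 dotv_ge0. Qed.

Lemma sqr_le_dotv u i : u i 0 ^+ 2 <= dotv u u.
Proof.
rewrite dotvE (bigD1 i) //= expr2 lerDl.
by apply: sumr_ge0 => j _; rewrite -expr2 sqr_ge0.
Qed.

Lemma mxnorm_l1_ge0 A : 0 <= mxnorm_l1 A.
Proof. by apply: sumr_ge0 => i _; apply: sumr_ge0. Qed.

Lemma qformE S x : qform S x = \sum_i \sum_j S i j * (x i 0 * x j 0).
Proof.
rewrite /qform dotvE; apply: eq_bigr => i _.
by rewrite mxE big_distrr; apply: eq_bigr => j _ /=; rewrite mulrCA mulrA.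
Qed.

Lemma norm_qform_le S x : `|qform S x| <= mxnorm_l1 S * dotv x x.
Proof.
rewrite qformE mulr_suml; apply: le_trans (ler_norm_sum _ _ _) _.
apply: ler_sum => i _; rewrite mulr_suml; apply: le_trans (ler_norm_sum _ _ _) _.
apply: ler_sum => j _; rewrite normrM ler_wpM2l //.
have := sqr_le_dotv x i; have := sqr_le_dotv x j.
(* |ab| <= (a^2 + b^2) / 2 *)
have := sqr_ge0 (x i 0 - x j 0); have := sqr_ge0 (x i 0 + x j 0).
by case: (lerP 0 (x i 0 * x j 0)) => [/ger0_norm|/ltr0_norm] ->; nra.
Qed.

Lemma qform_le S x : qform S x <= mxnorm_l1 S * dotv x x.
Proof. exact: le_trans (ler_norm _) (norm_qform_le _ _). Qed.

Lemma qform_gram B x : qform (B^T *m B) x = dotv (B *m x) (B *m x).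
Proof. by rewrite /qform -mulmxA dotv_mulmx trmxK. Qed.

Lemma dotv_mulmx_le B x :
  dotv (B *m x) (B *m x) <= mxnorm_l1 (B^T *m B) * dotv x x.
Proof. by rewrite -qform_gram qform_le. Qed.

Lemma qform_subr_scalar S a x : qform (S - a%:M) x = qform S x - a * dotv x x.
Proof. by rewrite /qform mulmxBl mul_scalar_mx dotvDr dotvNr dotvZr. Qed.

Lemma quadratic_ge0_discr (a b c : R) : 0 <= c ->
  (forall t, 0 <= a + 2 * t * b + t ^+ 2 * c) -> b ^+ 2 <= a * c.
Proof.
move=> c0 quad_ge0; have [c_gt0|c_le0] := ltrP 0 c.
  have := quad_ge0 (- b / c).
  have -> : a + 2 * (- b / c) * b + (- b / c) ^+ 2 * c = a - b ^+ 2 / c.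
    by field; rewrite gt_eqF.
  by rewrite subr_ge0 ler_pdivrMr // mulrC.
have c_eq0 : c = 0 by apply/eqP; rewrite eq_le c_le0 c0.
move: quad_ge0; rewrite c_eq0 mulr0 => quad_ge0.
have [->|b0] := eqVneq b 0; first by rewrite expr0n.
have := quad_ge0 (- (a + 1) / (2 * b)).
have -> : a + 2 * (- (a + 1) / (2 * b)) * b + (- (a + 1) / (2 * b)) ^+ 2 * 0 = -1.
  by field; rewrite b0.
by rewrite ler0N1.
Qed.

Section PositiveSemidefinite.
Variable T : 'M[R]_n.
Hypotheses (T_sym : T^T = T) (T_psd : forall z, 0 <= qform T z).

Lemma psd_cauchy_schwarz x y : dotv x (T *m y) ^+ 2 <= qform T x * qform T y.
Proof.
apply: quadratic_ge0_discr => // t; have := T_psd (x + t *: y).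
rewrite /qform mulmxDr -scalemxAr dotvDl !dotvDr !dotvZl !dotvZr.
by rewrite [dotv y _]dotv_mulmx T_sym [dotv (T *m y) x]dotvC => qf_ge0; lra.
Qed.

Lemma psd_dotv_mulmx_le x : dotv (T *m x) (T *m x) <= mxnorm_l1 T * qform T x.
Proof.
set b := dotv (T *m x) (T *m x).
have b0 : 0 <= b := dotv_ge0 _.
have cs : b ^+ 2 <= qform T x * (mxnorm_l1 T * b).
  have := psd_cauchy_schwarz x (T *m x).
  rewrite dotv_mulmx T_sym -/b => /le_trans; apply.
  by rewrite ler_wpM2l // qform_le.
have : 0 <= mxnorm_l1 T * qform T x by rewrite mulr_ge0 ?mxnorm_l1_ge0.
nra.
Qed.

Lemma psd_notunit :
  (forall e, 0 < e -> exists x, qform T x < e * dotv x x) -> T \notin unitmx.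
Proof.
move=> small_qform; apply/negP => T_unit.
set K := mxnorm_l1 ((invmx T)^T *m invmx T); set C := mxnorm_l1 T.
have KC0 : 0 <= K * C by rewrite mulr_ge0 ?mxnorm_l1_ge0.
have dotv_le x : dotv x x <= K * C * qform T x.
  rewrite -mulrA.
  apply: le_trans (ler_wpM2l (mxnorm_l1_ge0 _) (psd_dotv_mulmx_le x)).
  by have := dotv_mulmx_le (invmx T) (T *m x); rewrite mulKmx.
have e_gt0 : 0 < (K * C + 1)^-1 by rewrite invr_gt0; lra.
have [x qx_lt] := small_qform _ e_gt0.
have := dotv_le x; have := T_psd x; have := dotv_ge0 x.
have : K * C * (K * C + 1)^-1 = 1 - (K * C + 1)^-1.
  by field; rewrite gt_eqF //; lra.
nra.
Qed.

End PositiveSemidefinite.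

Lemma eigenvalueE S a : eigenvalue S a = (S - a%:M \notin unitmx).
Proof. by rewrite /eigenvalue /eigenspace kermx_eq0 row_free_unit. Qed.

Lemma sym_eigenvalue_qform S a : S^T = S -> eigenvalue S a ->
  exists2 w, w != 0 & qform S w = a * dotv w w.
Proof.
move=> S_sym /eigenvalueP[v vS v0]; exists v^T; first by rewrite trmx_eq0.
by rewrite /qform -[S]S_sym -trmx_mul vS linearZ dotvZr.
Qed.

End QuadraticForms.

Section ExtremeEigenvalues.
Variables (R : realType) (n : nat).
Hypothesis n_gt0 : (0 < n)%N.
Implicit Types (x z : 'cV[R]_n) (A B S : 'M[R]_n).

Lemma sym_min_eigenvalue S : S^T = S ->
  exists2 mu, eigenvalue S mu & forall x, mu * dotv x x <= qform S x.
Proof.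
move=> S_sym.
pose Q : set R := [set r | exists2 x, x != 0 & r = qform S x / dotv x x].
have Q_lb : lbound Q (- mxnorm_l1 S).
  move=> _ [x x0 ->]; rewrite ler_pdivlMr ?dotv_gt0 //.
  by have /ler_normlP[+ _] := norm_qform_le S x; rewrite mulNr lerNl.
have Q_neq0 : Q !=set0.
  pose x1 : 'cV[R]_n := const_mx 1.
  have x10 : x1 != 0.
    apply: contraTneq isT => /matrixP/(_ (Ordinal n_gt0) 0).
    by rewrite !mxE => /eqP; rewrite oner_eq0.
  by exists (qform S x1 / dotv x1 x1), x1.
have mu_le x : inf Q * dotv x x <= qform S x.
  have [->|x0] := eqVneq x 0.
    by rewrite /qform mulmx0 /dotv !mulmx0 !mxE mulr0.
  rewrite -ler_pdivlMr ?dotv_gt0 //.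
  by apply: ge_inf; [exists (- mxnorm_l1 S) | exists x].
exists (inf Q) => //; rewrite eigenvalueE; apply: psd_notunit.
- by rewrite linearB /= tr_scalar_mx S_sym.
- by move=> z; rewrite qform_subr_scalar subr_ge0.
move=> e e_gt0; have /(inf_lt Q_neq0)[_ [x x0 ->]] : inf Q < inf Q + e by lra.
rewrite ltr_pdivrMr ?dotv_gt0 // => qx_lt.
by exists x; rewrite qform_subr_scalar; lra.
Qed.

Lemma sym_max_eigenvalue S : S^T = S ->
  exists2 la, eigenvalue S la & forall x, qform S x <= la * dotv x x.
Proof.
move=> S_sym; have [|mu mu_eig mu_le] := @sym_min_eigenvalue (- S).
  by rewrite linearN /= S_sym.
exists (- mu).
  move/eigenvalueP: mu_eig => [v vS v0]; apply/eigenvalueP; exists v => //.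
  by rewrite scaleNr -vS mulmxN opprK.
by move=> x; have := mu_le x; rewrite /qform mulNmx dotvNr; lra.
Qed.

Lemma gram_sym B : (B^T *m B)^T = B^T *m B.
Proof. by rewrite trmx_mul trmxK. Qed.

Lemma enorm_dotv z : enorm z = Num.sqrt (dotv z z).
Proof. by rewrite dotvE; congr Num.sqrt; apply: eq_bigr => i _; rewrite expr2. Qed.

Lemma enorm_ge0 z : 0 <= enorm z.
Proof. by rewrite enorm_dotv sqrtr_ge0. Qed.

Lemma sigma_min_mulmx_le B x : sigma_min B * enorm x <= enorm (B *m x).
Proof.
have [mu mu_eig mu_le] := sym_min_eigenvalue (gram_sym B).
have mu0 : 0 <= mu.
  have [w w0] := sym_eigenvalue_qform (gram_sym B) mu_eig.
  rewrite qform_gram => /(congr1 (fun r => r / dotv w w)).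
  by rewrite mulfK ?gt_eqF ?dotv_gt0 // => <-; rewrite divr_ge0 ?dotv_ge0.
have : sigma_min B <= Num.sqrt mu.
  apply: ge_inf; first by exists 0 => s [].
  by split; rewrite ?sqrtr_ge0 ?sqr_sqrtr.
move/ler_wpM2r => /(_ (enorm x) (sqrtr_ge0 _)) /le_trans; apply.
rewrite !enorm_dotv -sqrtrM // ler_wsqrtr //.
by have := mu_le x; rewrite qform_gram.
Qed.

Lemma sigma_max_ge_operator_bound A : exists2 s, 0 <= s <= sigma_max A &
  forall z, enorm (A *m z) <= s * enorm z.
Proof.
have [la la_eig la_le] := sym_max_eigenvalue (gram_sym A).
have [w w0 la_w] := sym_eigenvalue_qform (gram_sym A) la_eig.
have w_gt0 := dotv_gt0 w0.
have la0 : 0 <= la.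
  by rewrite -(pmulr_lge0 _ w_gt0) -la_w qform_gram dotv_ge0.
exists (Num.sqrt la); last first.
  by move=> z; rewrite !enorm_dotv -sqrtrM // ler_wsqrtr // -qform_gram.
rewrite sqrtr_ge0 /=; apply: ub_le_sup; last first.
  by split; rewrite ?sqrtr_ge0 ?sqr_sqrtr.
exists (Num.sqrt la) => s [s0 s_eig].
have [v v0 s_v] := sym_eigenvalue_qform (gram_sym A) s_eig.
have : s ^+ 2 <= la.
  by have := la_le v; rewrite s_v ler_pM2r ?dotv_gt0.
by move=> /ler_wsqrtr; rewrite sqrtr_sqr ger0_norm.
Qed.

End ExtremeEigenvalues.

Lemma hadamard_mask_diffE (R : realType) (d : nat) (W : 'M[R]_d)
    (Mh M : 'M[bool]_d) :
  hadamard_mask_diff W Mh M = hadamard_mask W Mh - hadamard_mask W M.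
Proof. by apply/matrixP => i j; rewrite !mxE mulrBr. Qed.

Lemma sigma_ratio_le_enorm_sub_invmx (R : realType) (n : nat) (A B : 'M[R]_n)
  (x : 'cV[R]_n) : (0 < n)%N -> A \in unitmx ->
  sigma_min (A - B) / sigma_max A * enorm x <= enorm (x - invmx A *m (B *m x)).
Proof.
move=> n_gt0 A_unit.
have -> : x - invmx A *m (B *m x) = invmx A *m ((A - B) *m x).
  by rewrite mulmxBl mulmxBr mulKmx.
set z := invmx A *m _; have Az : A *m z = (A - B) *m x by rewrite mulKVmx.
have [s /andP[s0 s_le] Az_le] := sigma_max_ge_operator_bound n_gt0 A.
have z0 := enorm_ge0 z.
(* when sigma_max A = 0 the left-hand side is 0, as x / 0 = 0 *)
have [->|smax0] := eqVneq (sigma_max A) 0; first by rewrite invr0 mulr0 mul0r.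
have smax_gt0 : 0 < sigma_max A by rewrite lt_def smax0 (le_trans s0).
rewrite mulrAC ler_pdivrMr //; apply: le_trans (sigma_min_mulmx_le n_gt0 _ x) _.
by rewrite -Az mulrC; apply: le_trans (Az_le z) _; rewrite ler_wpM2r.
Qed.

Theorem theorem1 (R : realType) (d : nat) (hd : (0 < d)%N)
  (W : 'M[R]_d) (x : 'cV[R]_d) (M : 'M[bool]_d)
  (P : {ffun 'M[bool]_d -> R})
  (P_ge0 : forall Mh, 0 <= P Mh)
  (P_sum1 : \sum_Mh P Mh = 1)
  (P_inv : forall Mh, 0 < P Mh -> hadamard_mask W Mh \in unitmx) :
  let y := hadamard_mask W M *m x in
  let xhat := fun Mh => invmx (hadamard_mask W Mh) *m y in
  \sum_Mh P Mh * enorm (x - xhat Mh)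
  >= \sum_(Mh | 0 < P Mh)
       P Mh * (sigma_min (hadamard_mask_diff W Mh M)
               / sigma_max (hadamard_mask W Mh)) * enorm x.
Proof.
rewrite /= [leRHS](bigID (fun Mh => 0 < P Mh)) /= -[leLHS]addr0.
apply: lerD.
  apply: ler_sum => Mh /P_inv Mh_unit; rewrite -mulrA ler_wpM2l //.
  by rewrite hadamard_mask_diffE sigma_ratio_le_enorm_sub_invmx.
by apply: sumr_ge0 => Mh _; rewrite mulr_ge0 // enorm_ge0.
Qed.
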